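(* Let $f:\mathbb{R}^{n_x}\to\mathbb{R}^{n_y}$ be a deterministic predictor and let $\bar D:\mathbb{R}^{n_x}\to\mathbb{R}^{n_y\times n_u}$ be given (in the paper, $\bar D(x)=\nabla_u \tilde f(x,u)|_{u=0}$ for an augmented function $\tilde f(x,u)$ with $\tilde f(x,\mathbf 0)=f(x)$). Fix a generator template $G_u\in\mathbb{R}^{n_u\times\nu}$, an integer $n_r\ge 1$, orthogonal matrices $R_1,\dots,R_{n_r}\in\mathbb{R}^{n_y\times n_y}$ and $R_0=\mathbf I$. For $\alpha\in\mathbb{R}^{\nu}_{\ge 0}$ define the uncertainty set $\mathcal U_\alpha=\langle \mathbf 0, G_u\,\mathrm{diag}(\alpha)\rangle$ and the zono-conformal predictor $\mathcal Y_\alpha(x)=\{f(x)+\bar D(x)u\mid u\in\mathcal U_\alpha\}$. Given finitely many data points $(x^{(m)},y^{(m)})\in\mathbb{R}^{n_x}\times\mathbb{R}^{n_y}$, $m\in\mathcal M_{\mathrm{cal}}$, consider the linear program in the variables $\alpha\in\mathbb{R}^\nu$ and $\beta_m\in\mathbb{R}^\nu$ ($m\in\mathcal M_{\mathrm{cal}}$): $$\min_{\alpha,\beta}\ \sum_{m\in\mathcal M_{\mathrm{cal}}}\sum_{i=0}^{n_r}\mathbf 1^\top\bigl|R_i\bar D(x^{(m)})G_u\bigr|\,\alpha$$ subject to, for all $m\in\mathcal M_{\mathrm{cal}}$: $\mathbf 0\le\alpha$, $\mathbf 0\le \alpha+\beta_m$, $\mathbf 0\le\alpha-\beta_m$, and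 $y^{(m)}-f(x^{(m)})=\bar D(x^{(m)})G_u\beta_m$. Then, if $(\alpha^*,\beta^* )$ is an optimal solution of this linear program, $\alpha^*$ is an optimal solution of the problem $$\min_{\alpha\in\mathbb{R}^\nu_{\ge0}}\ \sum_{m\in\mathcal M_{\mathrm{cal}}}\sum_{i=0}^{n_r}\bigl\|R_i\,\mathcal Y_\alpha(x^{(m)})\bigr\|_I\quad\text{s.t.}\quad y^{(m)}\in\mathcal Y_\alpha(x^{(m)})\ \ \forall m\in\mathcal M_{\mathrm{cal}}.$$
   Context: A zonotope with center $c\in\mathbb{R}^n$ and generator matrix $G\in\mathbb{R}^{n\times\nu}$ is $\langle c,G\rangle=\{c+\sum_{i=1}^{\nu}\lambda_iG_{(\cdot,i)}\mid \lambda_i\in[-1,1]\}$. The interval norm of $\langle c,G\rangle$ is $\|\langle c,G\rangle\|_I=\mathbf 1^\top|G|\mathbf 1$, where $|G|$ is the elementwise absolute value. For a matrix $R$, $R\langle c,G\rangle$ is represented as $\langle Rc,RG\rangle$; in particular $\mathcal Y_\alpha(x)=\langle f(x),\bar D(x)G_u\mathrm{diag}(\alpha)\rangle$ and $\|R_i\mathcal Y_\alpha(x)\|_I=\mathbf 1^\top|R_i\bar D(x)G_u\mathrm{diag}(\alpha)|\mathbf 1$. $\mathrm{diag}(\alpha)$ is the diagonal matrix with diagonal $\alpha$; inequalities between vectors are elementwise. *)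

From HB Require Import structures.
From mathcomp Require Import all_boot all_order all_algebra.
Set Implicit Arguments. Unset Strict Implicit. Unset Printing Implicit Defensive.
Import Order.TTheory GRing.Theory Num.Theory.
Local Open Scope ring_scope.

Definition cV_le (R : realFieldType) (n : nat) (a b : 'cV[R]_n) : Prop :=
  forall i, a i 0 <= b i 0.

Definition in_zonotope (R : realFieldType) (n v : nat)
    (c : 'cV[R]_n) (G : 'M[R]_(n, v)) (y : 'cV[R]_n) : Prop :=
  exists lam : 'cV[R]_v, (forall i, -1 <= lam i 0 <= 1) /\ y = c + G *m lam.

Definition diagc (R : realFieldType) (v : nat) (alpha : 'cV[R]_v) : 'M[R]_v :=
  diag_mx alpha^T.

Definition in_U (R : realFieldType) (nu v : nat) (Gu : 'M[R]_(nu, v))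
    (alpha : 'cV[R]_v) (u : 'cV[R]_nu) : Prop :=
  in_zonotope 0 (Gu *m diagc alpha) u.

Definition in_Y (R : realFieldType) (nx ny nu v : nat)
    (f : 'cV[R]_nx -> 'cV[R]_ny) (Dbar : 'cV[R]_nx -> 'M[R]_(ny, nu))
    (Gu : 'M[R]_(nu, v)) (alpha : 'cV[R]_v) (x : 'cV[R]_nx) (y : 'cV[R]_ny) : Prop :=
  exists u, in_U Gu alpha u /\ y = f x + Dbar x *m u.

(* Interval norm of a zonotope <c, G>: 1^T |G| 1. *)
Definition interval_norm (R : realFieldType) (n v : nat) (G : 'M[R]_(n, v)) : R :=
  \sum_(i < n) \sum_(j < v) `|G i j|.

(* ||R_i Y_alpha(x)||_I, with R_i Y_alpha(x) represented as <R_i f(x), R_i Dbar(x) G_u diag(alpha)> *)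
Definition Y_norm (R : realFieldType) (nx ny nu v : nat)
    (Dbar : 'cV[R]_nx -> 'M[R]_(ny, nu)) (Gu : 'M[R]_(nu, v))
    (Ri : 'M[R]_ny) (alpha : 'cV[R]_v) (x : 'cV[R]_nx) : R :=
  interval_norm (Ri *m (Dbar x *m Gu *m diagc alpha)).

Definition zc_cost (R : realFieldType) (nx ny nu v nr : nat) (M : finType)
    (Dbar : 'cV[R]_nx -> 'M[R]_(ny, nu)) (Gu : 'M[R]_(nu, v))
    (Rs : 'I_nr.+1 -> 'M[R]_ny) (xs : M -> 'cV[R]_nx) (alpha : 'cV[R]_v) : R :=
  \sum_(m : M) \sum_(i < nr.+1) Y_norm Dbar Gu (Rs i) alpha (xs m).

Definition lp_cost (R : realFieldType) (nx ny nu v nr : nat) (M : finType)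
    (Dbar : 'cV[R]_nx -> 'M[R]_(ny, nu)) (Gu : 'M[R]_(nu, v))
    (Rs : 'I_nr.+1 -> 'M[R]_ny) (xs : M -> 'cV[R]_nx) (alpha : 'cV[R]_v) : R :=
  \sum_(m : M) \sum_(i < nr.+1)
     \sum_(j < v) (\sum_(k < ny) `|(Rs i *m Dbar (xs m) *m Gu) k j|) * alpha j 0.

Definition lp_feasible (R : realFieldType) (nx ny nu v : nat) (M : finType)
    (f : 'cV[R]_nx -> 'cV[R]_ny) (Dbar : 'cV[R]_nx -> 'M[R]_(ny, nu))
    (Gu : 'M[R]_(nu, v)) (xs : M -> 'cV[R]_nx) (ys : M -> 'cV[R]_ny)
    (alpha : 'cV[R]_v) (beta : M -> 'cV[R]_v) : Prop :=
  cV_le 0 alpha /\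
  forall m : M,
    [/\ cV_le 0 (alpha + beta m), cV_le 0 (alpha - beta m)
      & ys m - f (xs m) = Dbar (xs m) *m Gu *m beta m].

From HB Require Import structures.
From mathcomp Require Import all_boot all_order all_algebra.
From mathcomp Require Import lra.
Set Implicit Arguments. Unset Strict Implicit. Unset Printing Implicit Defensive.
Import Order.TTheory GRing.Theory Num.Theory.
Local Open Scope ring_scope.

(* For alpha >= 0, the point y lies in Y_alpha(x) iff y - f(x) = Dbar(x) G_u beta
   for some beta with |beta| <= alpha elementwise (take beta = diag(alpha) lambda),
   and the interval norm of R_i Y_alpha(x) is the linear function
   1^T |R_i Dbar(x) G_u| alpha.  Hence the LP is the original problem with the
   membership witnesses beta_m made explicit: the projection of its feasible set
   onto alpha is the feasible set of the original problem, and on that set both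
   objectives coincide. *)

Section Zonotopes.

Variable R : realFieldType.

Definition cV_norm_le (n : nat) (b a : 'cV[R]_n) : Prop :=
  forall i, `|b i 0| <= a i 0.

Lemma cV_norm_leP (n : nat) (alpha beta : 'cV[R]_n) :
  cV_le 0 (alpha + beta) /\ cV_le 0 (alpha - beta) <-> cV_norm_le beta alpha.
Proof.
split=> [[hp hm] i | hb].
  by have := hp i; have := hm i; rewrite !mxE ler_norml => ? ?; apply/andP; lra.
by split=> i; have := hb i; rewrite !mxE ler_norml => /andP[? ?]; lra.
Qed.

Lemma in_zonotope_mulmx (n k v : nat) (c : 'cV[R]_n) (A : 'M[R]_(n, k))
    (G : 'M[R]_(k, v)) (y : 'cV[R]_n) :
  in_zonotope c (A *m G) y <-> exists z, in_zonotope 0 G z /\ y = c + A *m z.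
Proof.
split=> [[lam [hlam ->]] | [_ [[lam [hlam ->]] ->]]].
  by exists (G *m lam); split; [exists lam; rewrite add0r | rewrite mulmxA].
by exists lam; rewrite add0r mulmxA.
Qed.

(* With the convention b / 0 = 0, the witness b / a also covers a = 0. *)
Lemma norm_le_scale_unit (a b : R) :
  `|b| <= a -> `|b / a| <= 1 /\ b = a * (b / a).
Proof.
move=> hba; have [a0 | a_neq0] := eqVneq a 0.
  have b0 : b = 0 by apply/normr0_eq0/le_anti; rewrite normr_ge0 andbT -a0.
  by rewrite a0 b0 mul0r normr0 ler01 mul0r.
have a_gt0 : 0 < a by rewrite lt_neqAle eq_sym a_neq0 (le_trans _ hba).
by rewrite normrM normfV (gtr0_norm a_gt0) ler_pdivrMr // mul1r mulrC divfK.
Qed.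

Lemma in_zonotope_diagc (v : nat) (alpha b : 'cV[R]_v) :
  cV_le 0 alpha -> in_zonotope 0 (diagc alpha) b <-> cV_norm_le b alpha.
Proof.
move=> ha; split=> [[lam [hlam ->]] i | hb].
  have ai := ha i; rewrite mxE in ai.
  rewrite /diagc mul_diag_mx !mxE add0r normrM (ger0_norm ai) ler_piMr //.
  by rewrite ler_norml hlam.
exists (\col_i (b i 0 / alpha i 0)); split.
  by move=> i; rewrite mxE -ler_norml; case: (norm_le_scale_unit (hb i)).
apply/matrixP=> i j; rewrite (ord1 j) /diagc mul_diag_mx !mxE add0r.
by case: (norm_le_scale_unit (hb i)).
Qed.

Variables (nx ny nu v : nat).
Variables (f : 'cV[R]_nx -> 'cV[R]_ny) (Dbar : 'cV[R]_nx -> 'M[R]_(ny, nu)).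
Variable Gu : 'M[R]_(nu, v).

Lemma in_YP (alpha : 'cV[R]_v) (x : 'cV[R]_nx) (y : 'cV[R]_ny) :
  cV_le 0 alpha ->
  in_Y f Dbar Gu alpha x y <->
  exists beta, cV_norm_le beta alpha /\ y - f x = Dbar x *m Gu *m beta.
Proof.
move=> ha; split=> [[u [/in_zonotope_mulmx [b [hb ->]] ->]] | [b [hb he]]].
  exists b; split; first exact/(in_zonotope_diagc _ ha).
  by rewrite add0r addrC addKr mulmxA.
exists (Gu *m b); split; last by rewrite mulmxA -he addrC subrK.
by apply/in_zonotope_mulmx; exists b; split; [exact/in_zonotope_diagc | rewrite add0r].
Qed.

Lemma interval_norm_mul_diagc (n : nat) (A : 'M[R]_(n, v)) (alpha : 'cV[R]_v) :
  cV_le 0 alpha ->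
  interval_norm (A *m diagc alpha) = \sum_(j < v) (\sum_(k < n) `|A k j|) * alpha j 0.
Proof.
move=> ha; rewrite /interval_norm /diagc mul_mx_diag exchange_big /=.
apply: eq_bigr => j _; rewrite mulr_suml; apply: eq_bigr => k _.
by rewrite !mxE normrM [`|alpha j 0|]ger0_norm //; have := ha j; rewrite mxE.
Qed.

Variables (nr : nat) (M : finType) (Rs : 'I_nr.+1 -> 'M[R]_ny).
Variables (xs : M -> 'cV[R]_nx) (ys : M -> 'cV[R]_ny).

Lemma zc_cost_lp_cost (alpha : 'cV[R]_v) :
  cV_le 0 alpha -> zc_cost Dbar Gu Rs xs alpha = lp_cost Dbar Gu Rs xs alpha.
Proof.
move=> ha; apply: eq_bigr => m _; apply: eq_bigr => i _.
by rewrite /Y_norm !mulmxA interval_norm_mul_diagc.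
Qed.

Lemma lp_feasible_in_Y (alpha : 'cV[R]_v) (beta : M -> 'cV[R]_v) :
  lp_feasible f Dbar Gu xs ys alpha beta ->
  forall m, in_Y f Dbar Gu alpha (xs m) (ys m).
Proof.
move=> [ha hb] m; have [hp hm he] := hb m.
by apply/in_YP => //; exists (beta m); split=> //; apply/cV_norm_leP.
Qed.

Lemma in_Y_lp_feasible (alpha : 'cV[R]_v) :
  cV_le 0 alpha -> (forall m, in_Y f Dbar Gu alpha (xs m) (ys m)) ->
  exists beta, lp_feasible f Dbar Gu xs ys alpha beta.
Proof.
move=> ha hY.
have /fin_all_exists [beta hbeta] : forall m, exists b : 'cV[R]_v,
    cV_norm_le b alpha /\ ys m - f (xs m) = Dbar (xs m) *m Gu *m b.
  by move=> m; apply/in_YP.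
exists beta; split=> // m; have [/cV_norm_leP [hp hm] he] := hbeta m.
by split.
Qed.

End Zonotopes.

Theorem theorem6 (R : realFieldType) (nx ny nu v nr : nat) (M : finType)
    (f : 'cV[R]_nx -> 'cV[R]_ny) (Dbar : 'cV[R]_nx -> 'M[R]_(ny, nu))
    (Gu : 'M[R]_(nu, v)) (Rs : 'I_nr.+1 -> 'M[R]_ny)
    (xs : M -> 'cV[R]_nx) (ys : M -> 'cV[R]_ny)
    (hnr : (0 < nr)%N)
    (hR0 : Rs ord0 = 1%:M)
    (hRorth : forall i : 'I_nr.+1, Rs i *m (Rs i)^T = 1%:M /\ (Rs i)^T *m Rs i = 1%:M)
    (astar : 'cV[R]_v) (bstar : M -> 'cV[R]_v)
    (hfeas : lp_feasible f Dbar Gu xs ys astar bstar)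
    (hopt : forall (alpha : 'cV[R]_v) (beta : M -> 'cV[R]_v),
        lp_feasible f Dbar Gu xs ys alpha beta ->
        lp_cost Dbar Gu Rs xs astar <= lp_cost Dbar Gu Rs xs alpha) :
  [/\ cV_le 0 astar,
      (forall m : M, in_Y f Dbar Gu astar (xs m) (ys m))
    & forall alpha : 'cV[R]_v, cV_le 0 alpha ->
        (forall m : M, in_Y f Dbar Gu alpha (xs m) (ys m)) ->
        zc_cost Dbar Gu Rs xs astar <= zc_cost Dbar Gu Rs xs alpha].
Proof.
have astar_ge0 : cV_le 0 astar by case: hfeas.
split=> //; first exact: lp_feasible_in_Y hfeas.
move=> alpha alpha_ge0 /(in_Y_lp_feasible alpha_ge0) [beta hbeta].
by rewrite !zc_cost_lp_cost //; apply: hopt hbeta.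
Qed.
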